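(* Let $G=(V,E)$ be a finite simple connected graph, and let $\varphi$ be a failure pattern having at least one correct node, and set $R(\varphi)=\min_{v\in V}\mathrm{ecc}(v,\varphi)$. Then no algorithm (oblivious or not), even when the failure pattern $\varphi$ is known to all nodes in advance, solves binary consensus (inputs in $\{0,1\}$) in $G$ under failure pattern $\varphi$ in fewer than $R(\varphi)$ rounds. Consequently, under the $t$-resilient model consensus in $G$ requires at least $\max_{\varphi\in\Phi^{(t)}_{\mathrm{all}}}\min_{v\in V}\mathrm{ecc}(v,\varphi)$ rounds.
   Context: $N(v)$ is the neighbourhood of $v$. Synchronous rounds; each node sends a message to every neighbour in each round, receives its neighbours' messages, and computes; a node's state can only depend on information received along the message transmissions that occur. Failure patterns. A failure pattern is a set $\varphi=\{(v,F_v,f_v): v\in F\}$ with $F\subseteq V$, integers $f_v\ge1$ and nonempty $F_v\subseteq N(v)$: $v$ acts normally in rounds $<f_v$, in round $f_v$ its messages reach exactly $N(v)\setminus F_v$, afterwards it sends nothing. Nodes in $F$ are faulty, others correct. $\Phi^{(t)}_{\mathrm{all}}$ is the set of failure patterns with $|F|\le t$. Causal paths and eccentricity. A causal path w.r.t. $\varphi$ from $v$ to $v'$ is $u_1=v,\dots,u_q=v'$ with $u_{i+1}\in N(u_i)$, $u_i$ not crashed during rounds $1,\dots,i-1$, and $u_{i+1}\notin F_{u_i}$ if $u_i$ crashes at round $i$; length $q-1$. $\mathrm{ecc}(v,\varphi)$ is the maximum over correct $v'$ of the minimum length of a causal path from $v$ to $v'$ ($\infty$ if some correct $v'$ has none).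 Consensus. Every correct node outputs a value; all correct nodes output the same value, and it equals the input of some node. *)

From mathcomp Require Import all_boot.
Set Implicit Arguments. Unset Strict Implicit. Unset Printing Implicit Defensive.

Section Model.
Variable V : finType.
Variable e : rel V.  (* adjacency: u \in N(v) iff e v u *)

Definition simple_connected_graph : Prop :=
  symmetric e /\ irreflexive e /\ (forall x y : V, connect e x y).

(* A failure pattern: F (faulty set), for each v the set F_v and crash round f_v.
   Only the values at v \in F are meaningful. *)
Record pattern := Pattern {
  pF  : {set V};
  pFv : V -> {set V};
  pf  : V -> nat }.

Definition valid_pattern (phi : pattern) : Prop :=
  forall v, v \in pF phi ->
    [/\ 1 <= pf phi v, pFv phi v != set0 & pFv phi v \subset [set u | e v u]].

Definition correct (phi : pattern) (v : V) : bool := v \notin pF phi.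

(* The message of u to its neighbour w in round i (i >= 1) is transmitted:
   u is correct, or u crashes at a later round, or u crashes exactly at round i
   and w \notin F_u. *)
Definition delivered (phi : pattern) (u w : V) (i : nat) : bool :=
  [|| u \notin pF phi, i < pf phi u | (i == pf phi u) && (w \notin pFv phi u)].

(* Causal path w.r.t. phi from v to v' of length k: a sequence u_1 = v, ..., u_{k+1} = v'
   with u_{i+1} \in N(u_i), u_i not crashed during rounds 1..i-1 and
   u_{i+1} \notin F_{u_i} if u_i crashes at round i; i.e. the message of u_i to
   u_{i+1} in round i is transmitted. *)
Definition causal_path (phi : pattern) (v v' : V) (k : nat) : Prop :=
  exists p : seq V,
    [/\ size p = k.+1, head v p = v, last v p = v' &
        forall i, i < k ->
          e (nth v p i) (nth v p i.+1) && delivered phi (nth v p i) (nth v p i.+1) i.+1].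

(* ecc(v, phi) <= k : every correct v' has a causal path from v of length <= k
   (so the minimum length is <= k, hence the max over correct v' is <= k;
   ecc = oo is never <= k). *)
Definition ecc_le (phi : pattern) (v : V) (k : nat) : Prop :=
  forall v', correct phi v' -> exists2 j, j <= k & causal_path phi v v' j.

Definition R_le (phi : pattern) (k : nat) : Prop := exists v, ecc_le phi v k.

(* Execution of a general deterministic synchronous algorithm with state type S
   and message type M: initial state from (node, input); in round i each node v
   sends  send i v (state) w  to each neighbour w; the new state is computed from
   the old one and, for each u, Some message if u is a neighbour whose message
   reached v in round i, None otherwise. *)
Section Exec.
Variables (S M : Type).
Variable init : V -> bool -> S.
Variable send : nat -> V -> S -> V -> M.
Variable trans : nat -> V -> S -> (V -> option M) -> S.

Fixpoint exec (phi : pattern) (x : V -> bool) (k : nat) : V -> S :=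
  match k with
  | 0 => fun v => init v (x v)
  | k'.+1 => fun v =>
      trans k'.+1 v (exec phi x k' v)
        (fun u => if e u v && delivered phi u v k'.+1
                  then Some (send k'.+1 u (exec phi x k' u) v) else None)
  end.

Definition solves_consensus (out : V -> S -> bool) (phi : pattern) (r : nat) : Prop :=
  forall x : V -> bool,
    (forall v w, correct phi v -> correct phi w ->
       out v (exec phi x r v) = out w (exec phi x r w)) /\
    (forall v, correct phi v -> exists u, out v (exec phi x r v) = x u).
End Exec.
End Model.

From mathcomp Require Import all_boot.
From Stdlib Require Import Classical FunctionalExtensionality.
From mathcomp Require Import zify.
Set Implicit Arguments. Unset Strict Implicit.

(* Indistinguishability: after r rounds the state of w depends only on the inputs
   of the nodes with a causal path of length at most r to w.  If R(phi) > r, every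
   node a has a correct node w_a it cannot reach in r rounds; flipping the input of
   a is then invisible to w_a, so w_a, and by agreement every correct node, decides
   the same.  Flipping the inputs one node at a time turns the all-0 input into the
   all-1 input without changing the decision, contradicting validity. *)

Section CausalPaths.
Variables (V : finType) (e : rel V) (phi : pattern V).

Definition influences (k : nat) (v w : V) : Prop :=
  exists2 j, j <= k & causal_path e phi v w j.

Lemma delivered_le u w i i' :
  i' <= i -> delivered phi u w i -> delivered phi u w i'.
Proof.
rewrite /delivered => le_i'i /or3P [->|lt_if|/andP[/eqP eq_if w_nFu]] //.
  by rewrite (leq_ltn_trans le_i'i lt_if) orbT.
have [_|ge_i'f] := ltnP i' (pf phi u); first by rewrite orbT.
have -> : i' == pf phi u by apply/eqP; lia.
by rewrite w_nFu !orbT.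
Qed.

Lemma causal_path0 v : causal_path e phi v v 0.
Proof. by exists [:: v]. Qed.

Lemma causal_path_rcons v u w j k :
  j <= k -> causal_path e phi v u j -> e u w -> delivered phi u w k.+1 ->
  causal_path e phi v w j.+1.
Proof.
move=> le_jk [p [size_p head_p last_p step_p]] e_uw del_uw.
have nth_p m : m < size p -> nth v (rcons p w) m = nth v p m.
  by move=> lt_m; rewrite nth_rcons lt_m.
exists (rcons p w); split.
- by rewrite size_rcons size_p.
- by case: p size_p head_p {last_p step_p nth_p}.
- by rewrite last_rcons.
move=> i lt_ij1; have [lt_ij|ge_ij] := ltnP i j.
  by rewrite !nth_p ?size_p //; exact: step_p.
have -> : i = j by lia.
rewrite nth_p ?size_p // nth_rcons size_p ltnn eqxx.
have -> : nth v p j = u by rewrite -last_p -nth_last size_p.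
by rewrite e_uw (delivered_le _ del_uw).
Qed.

Lemma influences_mono k v w : influences k v w -> influences k.+1 v w.
Proof. by case=> j le_jk path_j; exists j => //; exact: leqW. Qed.

Lemma influences_step k v u w :
  influences k v u -> e u w -> delivered phi u w k.+1 -> influences k.+1 v w.
Proof.
by case=> j le_jk path_j e_uw del_uw; exists j.+1; last exact: causal_path_rcons path_j e_uw del_uw.
Qed.

End CausalPaths.

Section Execution.
Variables (V : finType) (e : rel V) (phi : pattern V).
Variables (S M : Type) (init : V -> bool -> S) (send : nat -> V -> S -> V -> M).
Variables (trans : nat -> V -> S -> (V -> option M) -> S) (out : V -> S -> bool).

Local Notation exec := (exec e init send trans phi).

Lemma exec_local k w x y :
  (forall v, influences e phi k v w -> x v = y v) -> exec x k w = exec y k w.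
Proof.
elim: k w => [|k IHk] w eq_xy /=.
  by rewrite eq_xy //; exists 0 => //; exact: causal_path0.
rewrite (IHk w) => [|v /influences_mono]; last exact: eq_xy.
congr (trans _ _ _ _); apply: functional_extensionality => u.
case: ifP => // /andP[e_uw del_uw].
by rewrite (IHk u) // => v infl_vu; apply: eq_xy; exact: influences_step del_uw.
Qed.

Variable r : nat.
Hypothesis consensus : solves_consensus e init send trans out phi r.

Lemma decision_indep_of_hidden_input c w a x y :
  correct phi c -> correct phi w -> ~ influences e phi r a w ->
  (forall v, v != a -> x v = y v) ->
  out c (exec x r c) = out c (exec y r c).
Proof.
move=> c_ok w_ok a_hidden eq_xy.
have [agree_x _] := consensus x; have [agree_y _] := consensus y.
rewrite (agree_x c w) // (agree_y c w) // (@exec_local r w x y) // => v infl_vw.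
by apply: eq_xy; apply: contraPneq a_hidden => <-.
Qed.

Lemma consensus_R_le : (exists c, correct phi c) -> R_le e phi r.
Proof.
move=> [c c_ok]; apply: NNPP => R_gt.
have hidden a : exists w, correct phi w /\ ~ influences e phi r a w.
  apply: NNPP => no_hidden; apply: R_gt; exists a => w w_ok.
  by apply: NNPP => not_infl; apply: no_hidden; exists w.
have decide_const (s : seq V) :
    out c (exec (fun v => v \in s) r c) = out c (exec (fun=> false) r c).
  elim: s => [|a s <-]; first by congr (out _ (exec _ _ _)); apply: functional_extensionality.
  have [w [w_ok a_hidden]] := hidden a.
  apply: decision_indep_of_hidden_input w_ok a_hidden _ => // v /negbTE v_na.
  by rewrite in_cons v_na.
have [_ valid_0] := consensus (fun=> false).
have [_ valid_1] := consensus (fun v => v \in enum V).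
have [u] := valid_1 c c_ok; have [u'] := valid_0 c c_ok.
by rewrite decide_const => -> ; rewrite mem_enum.
Qed.

End Execution.

Lemma R_le_no_correct (V : finType) (e : rel V) (phi : pattern V) r :
  0 < #|V| -> ~ (exists v, correct phi v) -> R_le e phi r.
Proof.
by case/card_gt0P=> v0 _ no_correct; exists v0 => w w_ok; case: no_correct; exists w.
Qed.

Theorem mainTheorem7 (V : finType) (e : rel V) :
  simple_connected_graph e ->
  (* lower bound for a fixed pattern phi (the algorithm may depend on phi) *)
  (forall phi : pattern V, valid_pattern e phi -> (exists v, correct phi v) ->
   forall (S M : Type) (init : V -> bool -> S) (send : nat -> V -> S -> V -> M)
          (trans : nat -> V -> S -> (V -> option M) -> S) (out : V -> S -> bool) (r : nat),
     solves_consensus e init send trans out phi r -> R_le e phi r)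
  /\
  (* t-resilient consequence: r >= max over phi in Phi^(t)_all of R(phi) *)
  (0 < #|V| ->
   forall (t : nat) (S M : Type) (init : V -> bool -> S) (send : nat -> V -> S -> V -> M)
          (trans : nat -> V -> S -> (V -> option M) -> S) (out : V -> S -> bool) (r : nat),
     (forall phi : pattern V, valid_pattern e phi -> #|pF phi| <= t ->
        solves_consensus e init send trans out phi r) ->
     forall phi : pattern V, valid_pattern e phi -> #|pF phi| <= t -> R_le e phi r).
Proof.
move=> _; split=> [phi _ has_correct S M init send trans out r consensus|].
  exact: consensus_R_le consensus has_correct.
move=> V_gt0 t S M init send trans out r consensus phi phi_ok phi_t.
have [has_correct|no_correct] := classic (exists v, correct phi v).
  exact: consensus_R_le (consensus phi phi_ok phi_t) has_correct.
exact: R_le_no_correct.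
Qed.
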